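(* For every integer $n\ge 2$ and every nonzero real $x$, $$O_{n}'(x)+\frac{n}{x}O_{n}(x)=\sum_{j=0}^{\lfloor (n-2)/2\rfloor}\frac{n-1-2j}{x^{2j+1}}\,O_{n-1-2j}(x),$$ where $O_n'$ denotes the derivative of $O_n$ with respect to $x$.
   Context: For a nonzero real number $x$, the Oresme polynomials $O_n(x)$, $n\ge 0$, are defined by $O_{0}(x)=0$, $O_{1}(x)=\frac{1}{x}$, and $O_{n+1}(x)=O_{n}(x)-\frac{1}{x^{2}}O_{n-1}(x)$ for all $n\ge 1$; each $O_n$ is thus a rational function of $x$ (a polynomial in $1/x$), differentiable on $x\neq 0$. *)

From Stdlib Require Import Reals Lra Lia.
Open Scope R_scope.

(* Oresme polynomials: O_0 = 0, O_1 = 1/x, O_{n+1} = O_n - (1/x^2) O_{n-1}. *)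
Fixpoint Oresme_pair (n : nat) (x : R) : R * R :=
  match n with
  | O => (0, 1 / x)
  | S m => let (a, b) := Oresme_pair m x in (b, b - (1 / x ^ 2) * a)
  end.

Definition Oresme (n : nat) (x : R) : R := fst (Oresme_pair n x).

(* Write S_n(x) for the right-hand side of the theorem.  Peeling off the
   term j = 0 shows that S_n obeys the two-step recursion
       S_0 = S_1 = 0,   S_{n+2} = (n+1)/x O_{n+1} + S_n / x^2,
   so we take this recursion as the definition of [oresme_rhs] and prove
   separately that the finite sum computes it ([oresme_sum_rhs]).

   Differentiating the
   Oresme recursion gives O_{n+2}' = O_{n+1}' + 2/x^3 O_n - O_n'/x^2
   ([Oresme_derive_step]); the candidate S_n - (n/x) O_n satisfies the same
   recursion thanks to the auxiliary identity
       S_{n+1} = n/x O_{n+1} + 2/x^2 S_n          ([oresme_rhs_succ]),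
   so a two-step induction ([nat_ind2]) yields the derivative formula
   ([Oresme_derive]). *)

From Stdlib Require Import Reals Lia FunctionalExtensionality.
Open Scope R_scope.

Lemma nat_ind2 (P : nat -> Prop) :
  P 0%nat -> P 1%nat -> (forall n, P n -> P (S n) -> P (S (S n))) ->
  forall n, P n.
Proof.
  intros H0 H1 HS n.
  assert (Hpair : P n /\ P (S n)).
  { induction n as [|n [Hn HSn]]; split; auto. }
  exact (proj1 Hpair).
Qed.

Lemma Oresme_0 (x : R) : Oresme 0 x = 0.
Proof. reflexivity. Qed.

Lemma Oresme_1 (x : R) : Oresme 1 x = 1 / x.
Proof. reflexivity. Qed.

Lemma Oresme_SS (n : nat) (x : R) :
  Oresme (S (S n)) x = Oresme (S n) x - 1 / x ^ 2 * Oresme n x.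
Proof.
  unfold Oresme; simpl; destruct (Oresme_pair n x); reflexivity.
Qed.

Section AtPoint.

Variable x : R.
Hypothesis hx : x <> 0.

Lemma derivable_pt_lim_inv_pow (k : nat) :
  derivable_pt_lim (fun y => 1 / y ^ k) x (- INR k * x ^ Init.Nat.pred k / (x ^ k) ^ 2).
Proof.
  assert (Hxk : x ^ k <> 0) by (apply pow_nonzero; exact hx).
  replace (fun y => 1 / y ^ k) with ((fun _ => 1) / (fun y => y ^ k))%F
    by (apply functional_extensionality; reflexivity).
  replace (- INR k * x ^ Init.Nat.pred k / (x ^ k) ^ 2)
    with ((0 * x ^ k - INR k * x ^ Init.Nat.pred k * 1) / (x ^ k)²)
    by (unfold Rsqr; field; exact Hxk).
  apply derivable_pt_lim_div;
    [apply derivable_pt_lim_const | apply derivable_pt_lim_pow | exact Hxk].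
Qed.

Lemma Oresme_derive_step (n : nat) (d0 d1 : R) :
  derivable_pt_lim (Oresme n) x d0 ->
  derivable_pt_lim (Oresme (S n)) x d1 ->
  derivable_pt_lim (Oresme (S (S n))) x
    (d1 + 2 / x ^ 3 * Oresme n x - 1 / x ^ 2 * d0).
Proof.
  intros H0 H1.
  replace (Oresme (S (S n)))
    with (Oresme (S n) - (fun y => (1 / y ^ 2)%R) * Oresme n)%F
    by (apply functional_extensionality; intro y; rewrite Oresme_SS; reflexivity).
  pose proof (derivable_pt_lim_minus _ _ _ _ _ H1
    (derivable_pt_lim_mult _ _ _ _ _ (derivable_pt_lim_inv_pow 2) H0)) as H.
  match type of H with derivable_pt_lim _ _ ?L =>
    replace (d1 + 2 / x ^ 3 * Oresme n x - 1 / x ^ 2 * d0) with L end.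
  - exact H.
  - simpl; field; exact hx.
Qed.

Fixpoint oresme_rhs (n : nat) : R :=
  match n with
  | O => 0
  | S O => 0
  | S (S m as k) => INR k / x * Oresme k x + oresme_rhs m / x ^ 2
  end.

Lemma oresme_rhs_succ (n : nat) :
  oresme_rhs (S n) = INR n / x * Oresme (S n) x + 2 / x ^ 2 * oresme_rhs n.
Proof.
  induction n as [| | n IHn IHSn] using nat_ind2.
  - simpl; field; exact hx.
  - simpl oresme_rhs; rewrite Oresme_SS, Oresme_0; simpl; field; exact hx.
  - change (oresme_rhs (S (S (S n))))
      with (INR (S (S n)) / x * Oresme (S (S n)) x + oresme_rhs (S n) / x ^ 2).
    change (oresme_rhs (S (S n)))
      with (INR (S n) / x * Oresme (S n) x + oresme_rhs n / x ^ 2).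
    rewrite IHn, !Oresme_SS, !S_INR.
    field; exact hx.
Qed.

Lemma Oresme_derive (n : nat) :
  derivable_pt_lim (Oresme n) x (oresme_rhs n - INR n / x * Oresme n x).
Proof.
  induction n as [| | n IHn IHSn] using nat_ind2.
  - replace (oresme_rhs 0 - INR 0 / x * Oresme 0 x) with 0
      by (simpl; field; exact hx).
    replace (Oresme 0) with (fun _ : R => 0)
      by (apply functional_extensionality; reflexivity).
    apply derivable_pt_lim_const.
  - replace (oresme_rhs 1 - INR 1 / x * Oresme 1 x)
      with (- INR 1 * x ^ Init.Nat.pred 1 / (x ^ 1) ^ 2)
      by (rewrite Oresme_1; simpl; field; exact hx).
    replace (Oresme 1) with (fun y => 1 / y ^ 1)
      by (apply functional_extensionality; intro y; rewrite Oresme_1; f_equal; ring).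
    apply derivable_pt_lim_inv_pow.
  - pose proof (Oresme_derive_step n _ _ IHn IHSn) as H.
    match type of H with derivable_pt_lim _ _ ?L => replace L with
      (oresme_rhs (S (S n)) - INR (S (S n)) / x * Oresme (S (S n)) x) in H end.
    + exact H.
    + change (oresme_rhs (S (S n)))
        with (INR (S n) / x * Oresme (S n) x + oresme_rhs n / x ^ 2).
      rewrite oresme_rhs_succ, !Oresme_SS, !S_INR.
      field; exact hx.
Qed.

Definition oresme_term (n j : nat) : R :=
  INR (n - 1 - 2 * j) / x ^ (2 * j + 1) * Oresme (n - 1 - 2 * j) x.

Lemma oresme_term_shift (n j : nat) :
  oresme_term (S (S n)) (S j) = oresme_term n j / x ^ 2.
Proof.
  unfold oresme_term.
  replace (S (S n) - 1 - 2 * S j)%nat with (n - 1 - 2 * j)%nat by lia.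
  replace (2 * S j + 1)%nat with (2 * j + 1 + 2)%nat by lia.
  rewrite pow_add.
  field; repeat split; try apply pow_nonzero; exact hx.
Qed.

Lemma oresme_sum_rhs (k : nat) :
  sum_f_R0 (oresme_term (k + 2)) (k / 2) = oresme_rhs (k + 2).
Proof.
  induction k as [| | k IHk _] using nat_ind2.
  - simpl; unfold oresme_term; simpl; field; exact hx.
  - simpl; unfold oresme_term; simpl; field; exact hx.
  - replace (S (S k) / 2)%nat with (S (k / 2)).
    2: { replace (S (S k)) with (k + 1 * 2)%nat by lia.
         rewrite Nat.div_add by lia; lia. }
    rewrite decomp_sum by lia; rewrite Nat.pred_succ.
    replace (S (S k) + 2)%nat with (S (S (k + 2))) by lia.
    rewrite (sum_eq _ (fun j => oresme_term (k + 2) j * (1 / x ^ 2)))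
      by (intros j _; rewrite oresme_term_shift; unfold Rdiv; ring).
    rewrite <- scal_sum, IHk.
    change (oresme_rhs (S (S (k + 2))))
      with (INR (S (k + 2)) / x * Oresme (S (k + 2)) x + oresme_rhs (k + 2) / x ^ 2).
    unfold oresme_term.
    replace (S (S (k + 2)) - 1 - 2 * 0)%nat with (S (k + 2)) by lia.
    simpl (2 * 0 + 1)%nat.
    field; exact hx.
Qed.

End AtPoint.

Theorem mainTheorem13 (n : nat) (x : R) (hn : (2 <= n)%nat) (hx : x <> 0) :
  exists D : R,
    derivable_pt_lim (Oresme n) x D /\
    D + INR n / x * Oresme n x =
      sum_f_R0 (fun j => INR (n - 1 - 2 * j) / x ^ (2 * j + 1)
                          * Oresme (n - 1 - 2 * j) x)
               ((n - 2) / 2).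
Proof.
  exists (oresme_rhs x n - INR n / x * Oresme n x).
  split.
  - exact (Oresme_derive x hx n).
  - change (fun j => INR (n - 1 - 2 * j) / x ^ (2 * j + 1) * Oresme (n - 1 - 2 * j) x)
      with (oresme_term x n).
    destruct (Nat.le_exists_sub 2 n hn) as [k [-> _]].
    rewrite Nat.add_sub, oresme_sum_rhs by exact hx.
    ring.
Qed.
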